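(* Let $z\in\mathcal F^{\mathsf{BC}}_n$. Then $z\in\mathcal G^{\mathsf{BC}}_n$ if and only if there is an integer $0\le i\le n$ with $i\equiv n\pmod 2$ such that $-n\le z(n+1)<z(n+2)<\dots<z(n+i)\le n$ and $z(n+i+2j)=n+i+2j-1$ for each integer $j>0$ with $n+i+2j\le 2n$.
   Context: $W^{\mathsf{BC}}_{2n}$ is the group of permutations $w$ of $\{\pm1,\dots,\pm2n\}$ with $w(-i)=-w(i)$. $\mathcal F^{\mathsf{BC}}_n=\{z\in W^{\mathsf{BC}}_{2n}:z=z^{-1},\ |z(i)|\neq i\text{ for all }i\in[2n]\}$. An integer $i>0$ is a visible descent of $z$ if $z(i+1)<\min\{i,z(i)\}$ or $z(i)<-i$. $\mathcal G^{\mathsf{BC}}_n$ is the set of $z\in\mathcal F^{\mathsf{BC}}_n$ with no visible descent greater than $n$. *)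

From mathcomp Require Import all_boot all_order all_algebra.
Set Implicit Arguments. Unset Strict Implicit. Unset Printing Implicit Defensive.
Import Order.TTheory GRing.Theory Num.Theory.
Local Open Scope ring_scope.

(* A signed permutation w of {+-1,...,+-N} is represented by a function
   int -> int; only its values on the domain {i : 1 <= |i| <= N} matter. *)
Definition in_dom (N : nat) (i : int) : bool := (1 <= `|i|) && (`|i| <= N%:Z).

Definition is_signed_perm (N : nat) (w : int -> int) : Prop :=
  [/\ (forall i, in_dom N i -> in_dom N (w i)),
      (forall i j, in_dom N i -> in_dom N j -> w i = w j -> i = j),
      (forall k, in_dom N k -> exists2 i, in_dom N i & w i = k)
    & (forall i, in_dom N i -> w (- i) = - w i)].

Definition in_FBC (n : nat) (z : int -> int) : Prop :=
  [/\ is_signed_perm n.*2 z,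
      (forall i, in_dom n.*2 i -> z (z i) = i)
    & (forall i : nat, (1 <= i <= n.*2)%N -> `|z i%:Z| != i%:Z)].

(* Standard convention: elements of W^BC_N act on all of Z, fixing every
   integer outside {+-1,...,+-N}. *)
Definition ext (N : nat) (w : int -> int) (i : int) : int :=
  if in_dom N i then w i else i.

Definition vis_descent (n : nat) (z : int -> int) (i : int) : bool :=
  (0 < i) &&
  ((ext n.*2 z (i + 1) < Num.min i (ext n.*2 z i)) || (ext n.*2 z i < - i)).

Definition in_GBC (n : nat) (z : int -> int) : Prop :=
  in_FBC n z /\ (forall i : int, n%:Z < i -> ~~ vis_descent n z i).

From mathcomp Require Import all_boot all_order all_algebra.
From mathcomp Require Import zify.
Import Order.TTheory GRing.Theory Num.Theory.
Set Implicit Arguments. Unset Strict Implicit. Unset Printing Implicit Defensive.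
Local Open Scope ring_scope.

(* Above 2n a visible descent is impossible, so z in F^BC_n lies in G^BC_n
   iff every position n < p < 2n satisfies the local condition
   [no_descent_at]: z(p) >= -p, and z(p+1) >= p or z(p+1) >= z(p)
   ([GBC_local]).  Call a value z(p) with p > n "large" if |z(p)| > n.

   Under the local conditions a large value is
   positive ([large_value_pos]), and a large value z(p) = q > p forces
   q = p + 1, since otherwise z decreases weakly leftwards from q - 1 down
   to p + 1 ([descend_below]) and p becomes a descent
   ([large_value_adjacent]); hence a large z(x) is x - 1 or x + 1.  Let i be
   the length of the initial run n+1, n+2, ... of positions with small
   values.  The run is increasing ([prefix_increasing]), the positions after
   it are swapped in adjacent pairs ([tail_pairs], [tail_descents]), and
   since 2n cannot be paired with 2n + 1 we get i = n (mod 2)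
   ([prefix_parity]).

   Backward direction.  The shape forces z(q) = q -+ 1 after the run
   ([tail_neighbour]), from which every local condition is immediate
   ([local_of_shape]). *)

(* The negation of "p is a visible descent", for n < p < 2n. *)
Definition no_descent_at (n : nat) (z : int -> int) (p : nat) : Prop :=
  - p%:Z <= z p%:Z /\ (p%:Z <= z p.+1%:Z \/ z p%:Z <= z p.+1%:Z).

Definition GBC_shape (n : nat) (z : int -> int) (i : nat) : Prop :=
  [/\ (i <= n)%N, odd i = odd n,
      (forall k : nat, (1 <= k <= i)%N -> - (n%:Z) <= z (n + k)%N%:Z <= n%:Z),
      (forall k : nat, (1 <= k < i)%N -> z (n + k)%N%:Z < z (n + k.+1)%N%:Z)
    & (forall j : nat, (0 < j)%N -> (n + i + j.*2 <= n.*2)%N ->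
         z (n + i + j.*2)%N%:Z = (n + i + j.*2)%N%:Z - 1)].

Lemma vis_descent_nat (n : nat) (z : int -> int) (p : nat) :
  (0 < p < n.*2)%N ->
  vis_descent n z p%:Z = (z p.+1%:Z < Num.min p%:Z (z p%:Z)) || (z p%:Z < - p%:Z).
Proof.
move=> hp; have Dp : in_dom n.*2 p%:Z by rewrite /in_dom; lia.
have Dp1 : in_dom n.*2 (p%:Z + 1) by rewrite /in_dom; lia.
rewrite /vis_descent /ext Dp Dp1 (_ : p%:Z + 1 = p.+1%:Z) ?ltz_nat; last lia.
by case/andP: hp => ->.
Qed.

Lemma no_descent_atE (n : nat) (z : int -> int) (p : nat) :
  (0 < p < n.*2)%N -> no_descent_at n z p <-> ~~ vis_descent n z p%:Z.
Proof. move=> hp; rewrite vis_descent_nat // /no_descent_at; lia. Qed.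

(* A signed permutation of [+-2n] has no visible descent at i >= 2n, since
   z(i+1) is then extended as i + 1 and |z(i)| <= i. *)
Lemma no_vis_descent_beyond (n : nat) (z : int -> int) :
  (forall i, in_dom n.*2 i -> in_dom n.*2 (z i)) ->
  forall i : int, n.*2%:Z <= i -> ~~ vis_descent n z i.
Proof.
move=> zdom i hi; rewrite /vis_descent /ext.
have -> : in_dom n.*2 (i + 1) = false by rewrite /in_dom; lia.
case: ifP => Di; last by rewrite /in_dom in Di; lia.
by move: (zdom _ Di); rewrite /in_dom; lia.
Qed.

Lemma GBC_local (n : nat) (z : int -> int) : in_FBC n z ->
  in_GBC n z <-> forall p : nat, (n < p < n.*2)%N -> no_descent_at n z p.
Proof.
move=> zF; split=> [[_ zG] p hp | zL].
  by apply/no_descent_atE; [lia | apply: zG; lia].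
split=> // i hi.
have [top|below] := leP n.*2%:Z i.
  by case: zF => -[zdom _ _ _] _ _; exact: no_vis_descent_beyond.
have [p ip] : exists p : nat, i = p%:Z by exists `|i|%N; lia.
rewrite ip in hi below *.
by apply/no_descent_atE; [lia | apply: zL; lia].
Qed.

Section FixedPointFreeInvolution.
Variables (n : nat) (z : int -> int).
Hypothesis zF : in_FBC n z.

Lemma z_dom (p : nat) : (1 <= p <= n.*2)%N -> 1 <= `|z p%:Z| <= n.*2%:Z.
Proof.
move=> hp; case: zF => -[zdom _ _ _] _ _.
by have := zdom p%:Z; rewrite /in_dom; apply; lia.
Qed.

Lemma zK_nat (p : nat) : (1 <= p <= n.*2)%N -> z (z p%:Z) = p%:Z.
Proof. by move=> hp; case: zF => _ zK _; apply: zK; rewrite /in_dom; lia. Qed.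

Lemma z_inj_nat (p q : nat) : (1 <= p <= n.*2)%N -> (1 <= q <= n.*2)%N ->
  z p%:Z = z q%:Z -> p = q.
Proof.
move=> hp hq e; case: zF => -[_ zinj _ _] _ _.
by have := zinj p%:Z q%:Z; rewrite /in_dom => /(_ _ _ e); lia.
Qed.

Lemma z_fpf_nat (p : nat) : (1 <= p <= n.*2)%N -> `|z p%:Z| != p%:Z.
Proof. by move=> hp; case: zF => _ _; apply. Qed.

Lemma z_odd (x : int) : 1 <= `|x| <= n.*2%:Z -> z (- x) = - z x.
Proof. by move=> hx; case: zF => -[_ _ _ zN] _ _; apply: zN. Qed.

End FixedPointFreeInvolution.

Section LocalConditions.
Variables (n : nat) (z : int -> int).
Hypothesis zF : in_FBC n z.
Hypothesis zL : forall p : nat, (n < p < n.*2)%N -> no_descent_at n z p.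

(* Below the diagonal z can only decrease leftwards: if z(r+m) <= c < r then
   each step r + l (l < m) is forced to take its weak-increase branch. *)
Lemma descend_below (r m : nat) (c : int) : (n < r)%N -> (r + m <= n.*2)%N ->
  z (r + m)%N%:Z <= c -> c < r%:Z -> z r%:Z <= c.
Proof.
elim: m => [|m IH] hr hm hc cr; first by rewrite addn0 in hc.
apply: IH => //; first lia.
have [_] : no_descent_at n z (r + m) by apply: zL; lia.
by rewrite (_ : (r + m).+1 = (r + m.+1)%N); lia.
Qed.

(* A large value is positive: z(p) = -q with q > n would give z(q) = -p, and
   the lower bounds z(p) >= -p, z(q) >= -q would force p = q, contradicting
   |z(p)| <> p. *)
Lemma large_value_pos (p : nat) : (n < p <= n.*2)%N -> n%:Z < `|z p%:Z| ->
  0 < z p%:Z.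
Proof.
move=> hp large; rewrite ltNge; apply/negP => neg.
have [q zp] : exists q : nat, z p%:Z = - q%:Z by exists `|z p%:Z|%N; lia.
have zq : z q%:Z = - p%:Z.
  have -> : q%:Z = - z p%:Z by lia.
  by rewrite (z_odd zF) ?(zK_nat zF) //; have := z_dom zF (p := p); lia.
have := z_fpf_nat zF (p := p); have := z_dom zF (p := p).
have lower_p : (p < n.*2)%N -> - p%:Z <= z p%:Z by move=> ?; case: (zL (p := p)); lia.
have lower_q : (q < n.*2)%N -> - q%:Z <= z q%:Z by move=> ?; case: (zL (p := q)); lia.
lia.
Qed.

Lemma large_value_adjacent (p q : nat) : (n < p <= n.*2)%N ->
  z p%:Z = q%:Z -> (p < q)%N -> q = p.+1.
Proof.
move=> hp zp pq; apply/eqP; rewrite eqn_leq pq andbT leqNgt; apply/negP => far.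
have qdom : (q <= n.*2)%N by have := z_dom zF (p := p); lia.
have zq : z q%:Z = p%:Z by rewrite -zp (zK_nat zF); lia.
have zq1_ne : z q.-1%:Z != p%:Z.
  apply/eqP => e; have := z_inj_nat zF (p := q.-1) (q := q); rewrite e zq; lia.
have below_q : z q.-1%:Z <= p%:Z - 1.
  have [_] : no_descent_at n z q.-1 by apply: zL; lia.
  rewrite (_ : q.-1.+1 = q) ?zq; lia.
have below_p1 : z p.+1%:Z <= p%:Z - 1.
  apply: (descend_below (m := q.-1 - p.+1)); try lia.
  by rewrite (_ : (p.+1 + _)%N = q.-1); last lia.
have [_] : no_descent_at n z p by apply: zL; lia.
lia.
Qed.

Lemma large_value_neighbour (x : nat) : (n < x <= n.*2)%N -> n%:Z < `|z x%:Z| ->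
  z x%:Z = x.+1%:Z \/ z x%:Z = x.-1%:Z.
Proof.
move=> hx large; have pos := large_value_pos hx large.
have [q zx] : exists q : nat, z x%:Z = q%:Z by exists `|z x%:Z|%N; lia.
have fpf := z_fpf_nat zF (p := x).
rewrite zx; case: (ltngtP x q) => [xq | qx | xq].
- by left; rewrite (large_value_adjacent hx zx xq).
- right; have zq : z q%:Z = x%:Z by rewrite -zx (zK_nat zF) //; lia.
  by rewrite (large_value_adjacent _ zq qx); lia.
- by move: fpf; rewrite zx xq; lia.
Qed.

Section Prefix.
Variable i : nat.
Hypothesis i_le_n : (i <= n)%N.
Hypothesis prefix_small : forall k : nat, (1 <= k <= i)%N -> `|z (n + k)%N%:Z| <= n%:Z.
Hypothesis next_large : (i < n)%N -> n%:Z < `|z (n + i).+1%:Z|.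

Lemma tail_pairs (j : nat) : ((n + i + j.*2).+1 <= n.*2)%N ->
  z (n + i + j.*2).+1%:Z = (n + i + j.*2).+2%:Z.
Proof.
elim: j => [|j IH] hj.
  rewrite double0 addn0 in hj *.
  have large := next_large ltac:(lia).
  case: (large_value_neighbour (x := (n + i).+1)) => // [|zx]; first lia.
  have zni : z (n + i)%N%:Z = (n + i).+1%:Z by rewrite -zx (zK_nat zF) //; lia.
  case: (posnP i) => [i0 | i_gt0]; first by move: large; rewrite zx i0; lia.
  by have := prefix_small (k := i); rewrite zni; lia.
rewrite doubleS !addnS in hj *.
have zprev : z (n + i + j.*2).+2%:Z = (n + i + j.*2).+1%:Z.
  by rewrite -IH ?(zK_nat zF) //; lia.
have large : n%:Z < `|z (n + i + j.*2).+3%:Z|.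
  rewrite ltNge; apply/negP => small.
  have [_] : no_descent_at n z (n + i + j.*2).+2 by apply: zL; lia.
  by rewrite zprev; lia.
case: (large_value_neighbour (x := (n + i + j.*2).+3)) => // [|zx]; first lia.
have := zK_nat zF (p := (n + i + j.*2).+3); rewrite zx /= zprev; lia.
Qed.

(* The pairing must end exactly at 2n, as 2n cannot be mapped to 2n + 1. *)
Lemma prefix_parity : odd i = odd n.
Proof.
apply/eqP/negPn/negP => parity.
pose j := (n - i).-1./2.
have last_pair : (n + i + j.*2).+1 = n.*2 by rewrite /j; lia.
have := tail_pairs (j := j); rewrite last_pair => /(_ (leqnn _)) z_top.
by have := z_dom zF (p := n.*2); rewrite z_top; lia.
Qed.

(* Small values cannot satisfy z(p+1) >= p, and z is injective. *)
Lemma prefix_increasing (k : nat) : (1 <= k < i)%N ->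
  z (n + k)%N%:Z < z (n + k.+1)%N%:Z.
Proof.
move=> hk; have [_] : no_descent_at n z (n + k) by apply: zL; lia.
have := prefix_small (k := k); have := prefix_small (k := k.+1).
have := z_inj_nat zF (p := (n + k)%N) (q := (n + k.+1)%N).
by rewrite addnS; lia.
Qed.

Lemma tail_descents (j : nat) : (0 < j)%N -> (n + i + j.*2 <= n.*2)%N ->
  z (n + i + j.*2)%N%:Z = (n + i + j.*2)%N%:Z - 1.
Proof.
case: j => // j _ hj; rewrite doubleS !addnS in hj *.
have zpair := tail_pairs (j := j) ltac:(lia).
by rewrite -[in LHS]zpair (zK_nat zF); lia.
Qed.

End Prefix.

(* Forward direction: choose i as the first place where the small run ends. *)
Lemma shape_of_local : exists i : nat, GBC_shape n z i.
Proof.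
pose stop j := (j == n) || (n%:Z < `|z (n + j).+1%:Z|).
have stop_n : stop n by rewrite /stop eqxx.
have [i stop_i min_i] := ex_minnP (ex_intro stop n stop_n).
have i_le_n : (i <= n)%N by apply: min_i.
have prefix_small k : (1 <= k <= i)%N -> `|z (n + k)%N%:Z| <= n%:Z.
  move=> hk; have : ~~ stop k.-1 by apply/negP => /min_i; lia.
  by rewrite /stop negb_or (_ : (n + k.-1).+1 = (n + k)%N); lia.
have next_large : (i < n)%N -> n%:Z < `|z (n + i).+1%:Z|.
  by move: stop_i; rewrite /stop; case: eqP => //= ->; rewrite ltnn.
exists i; split=> //.
- exact: prefix_parity.
- by move=> k /prefix_small; lia.
- exact: prefix_increasing.
- exact: tail_descents.
Qed.

End LocalConditions.

Section ShapeGivesLocalConditions.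
Variables (n : nat) (z : int -> int) (i : nat).
Hypothesis zF : in_FBC n z.
Hypothesis shape : GBC_shape n z i.

(* After the run, z(q) = q - 1 or q + 1 according to the parity of q - n - i;
   for the value q + 1 we use that n + i is even, so that q < 2n. *)
Lemma tail_neighbour (q : nat) : (n + i < q <= n.*2)%N ->
  z q%:Z = q%:Z - 1 \/ z q%:Z = q%:Z + 1.
Proof.
case: shape => _ same_parity _ _ tail hq.
case: (boolP (odd (q - (n + i)))) => parity; [right | left].
- have := tail (q - (n + i)).+1./2 ltac:(lia) ltac:(lia).
  rewrite (_ : (n + i + _)%N = q.+1); last lia.
  move=> z_next; have {z_next} z_next : z q.+1%:Z = q%:Z by rewrite z_next; lia.
  by rewrite -[in LHS]z_next (zK_nat zF); lia.
- have := tail (q - (n + i))./2 ltac:(lia) ltac:(lia).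
  by rewrite (_ : (n + i + _)%N = q); last lia.
Qed.

(* Each local condition follows from the run (bounded, increasing) or from
   the tail (values at distance one). *)
Lemma local_of_shape (p : nat) : (n < p < n.*2)%N -> no_descent_at n z p.
Proof.
case: shape => i_le_n _ prefix_bounded prefix_incr _ hp; split.
- case: (leqP p (n + i)) => hpi; last by have := tail_neighbour (q := p); lia.
  by have := prefix_bounded (p - n)%N; rewrite subnKC; lia.
- case: (leqP p.+1 (n + i)) => hpi; last by have := tail_neighbour (q := p.+1); lia.
  by have := prefix_incr (p - n)%N; rewrite addnS subnKC; lia.
Qed.

End ShapeGivesLocalConditions.

Theorem mainTheorem7 (n : nat) (z : int -> int) :
  in_FBC n z ->
  (in_GBC n z <->
   exists i : nat,
     [/\ (i <= n)%N, odd i = odd n,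
         (forall k : nat, (1 <= k <= i)%N ->
            - (n%:Z) <= z (n + k)%N%:Z <= n%:Z),
         (forall k : nat, (1 <= k < i)%N ->
            z (n + k)%N%:Z < z (n + k.+1)%N%:Z)
       & (forall j : nat, (0 < j)%N -> (n + i + j.*2 <= n.*2)%N ->
            z (n + i + j.*2)%N%:Z = (n + i + j.*2)%N%:Z - 1)]).
Proof.
move=> zF; rewrite (GBC_local zF); split=> [zL | [i shape]].
- exact: (shape_of_local zF zL).
- exact: (local_of_shape zF shape).
Qed.
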